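(* Let $G$ be a periodic group such that the set of primes dividing the orders of elements of $G$ is exactly $\{2,3\}$, for any two elements $g,h\in G$ of orders at most $4$ the order of $gh$ is at most $9$, and the centralizer of every involution of $G$ is a locally cyclic $2$-group. Let $a,b\in\Gamma_2(G)$. Then $(ab)^9=1$. In particular, $G$ has a single conjugacy class of involutions, and $\Gamma_2(G)=a^G=a^{\Gamma_2(G)}$.
   Context: For a positive integer $n$, $\Gamma_n(G)$ denotes the set of elements of $G$ of order exactly $n$. For $a\in G$ and a subset $X\subseteq G$, $a^X=\{x^{-1}ax \mid x\in X\}$. *)

From Stdlib Require Import ZArith List Znumtheory.
Import ListNotations.

Record Group : Type := {
  carrier :> Type;
  gmul : carrier -> carrier -> carrier;
  ginv : carrier -> carrier;
  gone : carrier;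
  gmul_assoc : forall x y z, gmul x (gmul y z) = gmul (gmul x y) z;
  gmul_1l : forall x, gmul gone x = x;
  gmul_Vl : forall x, gmul (ginv x) x = gone
}.

Arguments gmul {g}.
Arguments ginv {g}.
Arguments gone {g}.

Fixpoint gpow {G : Group} (g : G) (n : nat) : G :=
  match n with
  | O => gone
  | S m => gmul g (gpow g m)
  end.

Definition zpow {G : Group} (g : G) (k : Z) : G :=
  match k with
  | Z0 => gone
  | Zpos p => gpow g (Pos.to_nat p)
  | Zneg p => ginv (gpow g (Pos.to_nat p))
  end.

Definition has_order {G : Group} (g : G) (n : nat) : Prop :=
  (0 < n)%nat /\ gpow g n = gone /\ (forall m, (0 < m < n)%nat -> gpow g m <> gone).

Definition Gamma {G : Group} (n : nat) (g : G) : Prop := has_order g n.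

Definition periodic (G : Group) : Prop :=
  forall g : G, exists n, (0 < n)%nat /\ gpow g n = gone.

Inductive gen {G : Group} (S : list G) : G -> Prop :=
  | gen_in : forall x, In x S -> gen S x
  | gen_one : gen S gone
  | gen_mul : forall x y, gen S x -> gen S y -> gen S (gmul x y)
  | gen_inv : forall x, gen S x -> gen S (ginv x).

Definition conjg {G : Group} (a x : G) : G := gmul (ginv x) (gmul a x).

Definition centralizer {G : Group} (a : G) (x : G) : Prop := gmul x a = gmul a x.

Definition locally_cyclic {G : Group} (H : G -> Prop) : Prop :=
  forall S : list G, Forall H S ->
    exists c, gen S c /\ forall x, gen S x -> exists k : Z, x = zpow c k.

Definition is_2group {G : Group} (H : G -> Prop) : Prop :=
  forall x, H x -> exists k, has_order x (2 ^ k)%nat.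

Definition prime_spectrum (G : Group) (p : nat) : Prop :=
  prime (Z.of_nat p) /\ exists (g : G) n, has_order g n /\ Nat.divide p n.

(* The product r = xy of two involutions is inverted by x, so <x, y> is dihedral.
   By hypothesis |r| <= 9, and 5 and 7 are excluded by the prime spectrum.  If
   |r| = 2m were even, r^m would be an involution commuting with x; the Klein
   four-group <x, r^m> lies in the locally cyclic centralizer of r^m, which
   forces x = r^m, hence x commutes with r and r^2 = 1, impossible.  So |r|
   divides 9, and then r^5 conjugates x to y, because r^10 = r.  Multiplying r^5
   by x when needed turns the conjugating element into an involution. *)

From Stdlib Require Import ZArith List Znumtheory Lia Classical.
Import ListNotations.

Lemma prime_5 : prime 5.
Proof.
  apply prime_alt; split; [lia |]; intros n Hn [q Hq].
  assert (n = 2 \/ n = 3 \/ n = 4)%Z as [-> | [-> | ->]] by lia; lia.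
Qed.

Lemma prime_7 : prime 7.
Proof.
  apply prime_alt; split; [lia |]; intros n Hn [q Hq].
  assert (n = 2 \/ n = 3 \/ n = 4 \/ n = 5 \/ n = 6)%Z
    as [-> | [-> | [-> | [-> | ->]]]] by lia; lia.
Qed.

Local Open Scope nat_scope.

Section GroupFacts.
Variable G : Group.
Implicit Types x y z : G.

Lemma gmul_Vr x : gmul x (ginv x) = gone.
Proof.
  rewrite <- (gmul_1l G (gmul x (ginv x))), <- (gmul_Vl G (ginv x)) at 1.
  rewrite <- gmul_assoc, (gmul_assoc G (ginv x) x (ginv x)), gmul_Vl, gmul_1l.
  apply gmul_Vl.
Qed.

Lemma gmul_1r x : gmul x gone = x.
Proof. rewrite <- (gmul_Vl G x), gmul_assoc, gmul_Vr; apply gmul_1l. Qed.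

Lemma ginv_unique x y : gmul x y = gone -> ginv x = y.
Proof.
  intro Hxy.
  rewrite <- (gmul_1r (ginv x)), <- Hxy, gmul_assoc, gmul_Vl; apply gmul_1l.
Qed.

Lemma ginv_mul x y : ginv (gmul x y) = gmul (ginv y) (ginv x).
Proof.
  apply ginv_unique.
  rewrite <- gmul_assoc, (gmul_assoc G y), gmul_Vr, gmul_1l; apply gmul_Vr.
Qed.

Lemma ginv_1 : ginv (@gone G) = gone.
Proof. apply ginv_unique, gmul_1l. Qed.

Lemma gmul_cancel_l x y z : gmul x y = gmul x z -> y = z.
Proof.
  intro E.
  rewrite <- (gmul_1l G y), <- (gmul_1l G z), <- (gmul_Vl G x), <- !gmul_assoc, E.
  reflexivity.
Qed.

Lemma gpow_add x m n : gpow x (m + n) = gmul (gpow x m) (gpow x n).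
Proof.
  induction m as [| m IH]; simpl; [now rewrite gmul_1l | now rewrite IH, gmul_assoc].
Qed.

Lemma gpow_1r x : gpow x 1 = x.
Proof. apply gmul_1r. Qed.

Lemma gpow_gone n : gpow (@gone G) n = gone.
Proof. induction n as [| n IH]; simpl; [| rewrite IH; apply gmul_1l]; reflexivity. Qed.

Lemma gpow_commute x n : gmul x (gpow x n) = gmul (gpow x n) x.
Proof.
  change (gmul x (gpow x n)) with (gpow x (1 + n)).
  now rewrite Nat.add_comm, gpow_add, gpow_1r.
Qed.

Lemma gpow_mul x m n : gpow x (m * n) = gpow (gpow x m) n.
Proof.
  induction n as [| n IH]; [now rewrite Nat.mul_0_r |].
  rewrite Nat.mul_succ_r, gpow_add, IH; simpl.
  symmetry; apply gpow_commute.
Qed.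

Lemma gpow_order x n : has_order x n -> forall q, gpow x (n * q) = gone.
Proof. intros [_ [Hn _]] q; now rewrite gpow_mul, Hn, gpow_gone. Qed.

Lemma Gamma2P x : Gamma 2 x <-> gmul x x = gone /\ x <> gone.
Proof.
  split.
  - intros [_ [Hx Hmin]]; simpl in Hx; rewrite gmul_1r in Hx.
    split; [exact Hx |]; intro E; apply (Hmin 1); [lia | now rewrite gpow_1r].
  - intros [Hx Hx1]; split; [lia | split].
    + simpl; now rewrite gmul_1r.
    + intros m Hm; replace m with 1 by lia; now rewrite gpow_1r.
Qed.

Lemma ginv_invol x : gmul x x = gone -> ginv x = x.
Proof. apply ginv_unique. Qed.

Lemma Gamma2_conjg a x : Gamma 2 a -> Gamma 2 (conjg a x).
Proof.
  rewrite !Gamma2P; unfold conjg; intros [Ha Ha1]; split.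
  - rewrite <- !gmul_assoc, (gmul_assoc G x (ginv x)), gmul_Vr, gmul_1l.
    rewrite (gmul_assoc G a a), Ha, gmul_1l; apply gmul_Vl.
  - intro E; apply Ha1, (gmul_cancel_l (ginv x)).
    rewrite gmul_1r; apply (f_equal (fun u => gmul u (ginv x))) in E.
    now rewrite <- !gmul_assoc, gmul_Vr, gmul_1r, gmul_1l in E.
Qed.

Lemma dihedral_gpow x y n : gmul x x = gone -> gmul y y = gone ->
  gmul x (gmul (gpow (gmul x y) n) x) = ginv (gpow (gmul x y) n).
Proof.
  intros Hx Hy; induction n as [| n IH]; simpl.
  - now rewrite gmul_1l, Hx, ginv_1.
  - set (p := gpow (gmul x y) n) in *; set (r := gmul x y) in *.
    assert (Hr : ginv r = gmul x (gmul r x)).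
    { apply ginv_unique; subst r.
      rewrite <- !gmul_assoc, (gmul_assoc G x x), Hx, gmul_1l.
      now rewrite (gmul_assoc G y y), Hy, gmul_1l. }
    assert (Hrp : gmul r p = gmul p r) by apply gpow_commute.
    rewrite ginv_mul, <- IH, Hr, <- !gmul_assoc; f_equal.
    now rewrite (gmul_assoc G x x), Hx, gmul_1l, !gmul_assoc, Hrp.
Qed.

Lemma gen_commuting_involutions x z :
  gmul x x = gone -> gmul z z = gone -> gmul x z = gmul z x ->
  forall c, gen [x; z] c -> c = gone \/ c = x \/ c = z \/ c = gmul x z.
Proof.
  intros Hx Hz Hxz.
  assert (e1 : gmul x (gmul x z) = z) by now rewrite gmul_assoc, Hx, gmul_1l.
  assert (e2 : gmul (gmul x z) x = z)
    by now rewrite <- gmul_assoc, <- Hxz, gmul_assoc, Hx, gmul_1l.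
  assert (e3 : gmul z (gmul x z) = x)
    by now rewrite gmul_assoc, <- Hxz, <- gmul_assoc, Hz, gmul_1r.
  assert (e4 : gmul (gmul x z) z = x) by now rewrite <- gmul_assoc, Hz, gmul_1r.
  assert (e5 : gmul (gmul x z) (gmul x z) = gone) by now rewrite gmul_assoc, e2.
  induction 1 as [c Hc | | c d _ IHc _ IHd | c _ IHc].
  - simpl in Hc; intuition.
  - now left.
  - destruct IHc as [-> | [-> | [-> | ->]]]; destruct IHd as [-> | [-> | [-> | ->]]];
      rewrite ?gmul_1l, ?gmul_1r, ?Hx, ?Hz, ?e1, ?e2, ?e3, ?e4, ?e5, <- ?Hxz; tauto.
  - destruct IHc as [-> | [-> | [-> | ->]]].
    + left; apply ginv_1.
    + right; left; now apply ginv_invol.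
    + right; right; left; now apply ginv_invol.
    + right; right; right; now apply ginv_invol.
Qed.

Lemma zpow_invol (c : G) (k : Z) : gmul c c = gone -> zpow c k = gone \/ zpow c k = c.
Proof.
  intro Hc.
  assert (Hpow : forall n, gpow c n = gone \/ gpow c n = c).
  { induction n as [| n [E | E]]; simpl; [now left | rewrite E | rewrite E].
    - right; apply gmul_1r.
    - now left. }
  destruct k as [| p | p]; simpl; [now left | apply Hpow |].
  destruct (Hpow (Pos.to_nat p)) as [-> | ->].
  - left; apply ginv_1.
  - right; now apply ginv_invol.
Qed.

(* <x, z> is a Klein four-group, but a cyclic group has at most one involution. *)
Lemma locally_cyclic_commuting_involutions x z :
  locally_cyclic (centralizer z) -> Gamma 2 x -> Gamma 2 z ->
  gmul x z = gmul z x -> x = z.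
Proof.
  intros Hlc Hx Hz Hxz.
  apply Gamma2P in Hx as [Hx Hx1]; apply Gamma2P in Hz as [Hz Hz1].
  destruct (Hlc [x; z]) as [c [Hc Hcyc]].
  { constructor; [exact Hxz | constructor; [reflexivity | constructor]]. }
  assert (Hcc : gmul c c = gone).
  { destruct (gen_commuting_involutions x z Hx Hz Hxz c Hc) as [-> | [-> | [-> | ->]]];
      [apply gmul_1l | exact Hx | exact Hz |].
    now rewrite <- !gmul_assoc, (gmul_assoc G z x z), <- Hxz, <- gmul_assoc, Hz,
      gmul_1r. }
  assert (Hgen_c : forall u, In u [x; z] -> u <> gone -> u = c).
  { intros u Hu Hu1; destruct (Hcyc u (gen_in _ u Hu)) as [k ->].
    now destruct (zpow_invol c k Hcc) as [E | E]; rewrite E in *. }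
  rewrite (Hgen_c x), (Hgen_c z); simpl; auto.
Qed.

Lemma product_involutions_not_even_order x y m :
  (forall t : G, Gamma 2 t -> locally_cyclic (centralizer t)) ->
  Gamma 2 x -> Gamma 2 y -> ~ has_order (gmul x y) (2 * m).
Proof.
  intros Hcent Hx Hy Hord.
  destruct Hord as [Hm [Hr2m Hmin]].
  pose proof (proj1 (Gamma2P x) Hx) as [Hxx _].
  pose proof (proj1 (Gamma2P y) Hy) as [Hyy Hy1].
  set (r := gmul x y) in *; set (z := gpow r m).
  assert (Hz : Gamma 2 z).
  { apply Gamma2P; split.
    - unfold z; rewrite <- gpow_add; replace (m + m) with (2 * m) by lia; exact Hr2m.
    - apply Hmin; lia. }
  assert (Hxzx : gmul x (gmul z x) = z).
  { unfold z, r; rewrite dihedral_gpow by assumption.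
    apply ginv_invol, Gamma2P, Hz. }
  assert (Hxz : gmul x z = gmul z x).
  { rewrite <- Hxzx at 2; now rewrite <- !gmul_assoc, Hxx, gmul_1r. }
  assert (Hxz_eq : x = z) by exact (locally_cyclic_commuting_involutions x z
    (Hcent z Hz) Hx Hz Hxz).
  assert (Hrx : gmul r x = gmul x r) by (rewrite Hxz_eq; apply gpow_commute).
  assert (Hrinv : r = ginv r).
  { pose proof (dihedral_gpow x y 1 Hxx Hyy) as D; rewrite gpow_1r in D; fold r in D.
    now rewrite <- D, Hrx, gmul_assoc, Hxx, gmul_1l. }
  destruct (Nat.eq_dec m 1) as [-> | Hm1].
  - apply Hy1, (gmul_cancel_l x); rewrite gmul_1r.
    now rewrite Hxz_eq at 2; unfold z; rewrite gpow_1r.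
  - apply (Hmin 2); [lia |]; simpl; rewrite gmul_1r.
    rewrite Hrinv at 2; apply gmul_Vr.
Qed.

Lemma product_involutions_gpow9
  (Hspec : forall p : nat, prime_spectrum G p <-> (p = 2 \/ p = 3))
  (H49 : forall (g h : G) (m n : nat), has_order g m -> has_order h n ->
           m <= 4 -> n <= 4 -> exists k, has_order (gmul g h) k /\ k <= 9)
  (Hcent : forall t : G, Gamma 2 t -> locally_cyclic (centralizer t))
  x y : Gamma 2 x -> Gamma 2 y -> gpow (gmul x y) 9 = gone.
Proof.
  intros Hx Hy.
  destruct (H49 x y 2 2 Hx Hy ltac:(lia) ltac:(lia)) as [k [Hk Hk9]].
  assert (Hdiv : forall q, k * q = 9 -> gpow (gmul x y) 9 = gone)
    by (intros q <-; now apply gpow_order).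
  assert (Hodd : forall m, k <> 2 * m).
  { intros m ->; exact (product_involutions_not_even_order x y m Hcent Hx Hy Hk). }
  assert (Hspec_k : forall p, prime (Z.of_nat p) -> k = p -> p = 2 \/ p = 3).
  { intros p Hp ->; apply Hspec; split; [exact Hp |].
    exists (gmul x y), p; split; [exact Hk | apply Nat.divide_refl]. }
  destruct Hk as [Hk0 _].
  assert (k = 1 \/ k = 2 \/ k = 3 \/ k = 4 \/ k = 5 \/ k = 6 \/ k = 7 \/ k = 8 \/ k = 9)
    as [-> | [-> | [-> | [-> | [-> | [-> | [-> | [-> | ->]]]]]]]] by lia.
  - now apply (Hdiv 9).
  - now destruct (Hodd 1).
  - now apply (Hdiv 3).
  - now destruct (Hodd 2).
  - now destruct (Hspec_k 5 prime_5).
  - now destruct (Hodd 3).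
  - now destruct (Hspec_k 7 prime_7).
  - now destruct (Hodd 4).
  - now apply (Hdiv 1).
Qed.

(* y = r^-5 x r^5 = x r^10 = x r, using that x inverts r = x y and r^9 = 1. *)
Lemma conjg_involution_gpow5 x y :
  gmul x x = gone -> gmul y y = gone -> gpow (gmul x y) 9 = gone ->
  y = conjg x (gpow (gmul x y) 5).
Proof.
  intros Hx Hy H9; unfold conjg.
  rewrite <- (dihedral_gpow x y 5 Hx Hy), <- !gmul_assoc, (gmul_assoc G x x), Hx,
    gmul_1l, <- gpow_add.
  change (5 + 5) with (9 + 1); rewrite gpow_add, H9, gmul_1l, gpow_1r.
  now rewrite gmul_assoc, Hx, gmul_1l.
Qed.

Lemma conjg_by_involution x y :
  Gamma 2 x -> Gamma 2 y -> gpow (gmul x y) 9 = gone ->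
  exists w, Gamma 2 w /\ y = conjg x w.
Proof.
  intros Hx Hy H9.
  pose proof (proj1 (Gamma2P x) Hx) as [Hxx _].
  pose proof (proj1 (Gamma2P y) Hy) as [Hyy _].
  pose proof (conjg_involution_gpow5 x y Hxx Hyy H9) as Hconj.
  pose proof (dihedral_gpow x y 5 Hxx Hyy) as Hinv.
  set (z := gpow (gmul x y) 5) in *.
  destruct (classic (gmul x z = gone)) as [E | E].
  - assert (Hzx : z = x) by (rewrite <- (ginv_unique x z E); now apply ginv_invol).
    exists x; split; [exact Hx | now rewrite Hconj, Hzx].
  - exists (gmul x z); split.
    + apply Gamma2P; split; [| exact E].
      now rewrite (gmul_assoc G (gmul x z) x z), <- (gmul_assoc G x z x), Hinv, gmul_Vl.
    + rewrite Hconj; unfold conjg.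
      now rewrite ginv_mul, (ginv_invol x Hxx), <- !gmul_assoc, (gmul_assoc G x x), Hxx, gmul_1l.
Qed.

End GroupFacts.

Theorem lemma1 (G : Group)
  (Hper : periodic G)
  (Hspec : forall p : nat, prime_spectrum G p <-> (p = 2 \/ p = 3))
  (H49 : forall (g h : G) (m n : nat), has_order g m -> has_order h n ->
           (m <= 4)%nat -> (n <= 4)%nat ->
           exists k, has_order (gmul g h) k /\ (k <= 9)%nat)
  (Hcent : forall t : G, Gamma 2 t ->
           locally_cyclic (centralizer t) /\ is_2group (centralizer t))
  (a b : G) (Ha : Gamma 2 a) (Hb : Gamma 2 b) :
  gpow (gmul a b) 9 = gone /\
  (forall x y : G, Gamma 2 x -> Gamma 2 y -> exists z : G, y = conjg x z) /\
  (forall y : G, Gamma 2 y <-> exists x : G, y = conjg a x) /\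
  (forall y : G, Gamma 2 y <-> exists x : G, Gamma 2 x /\ y = conjg a x).
Proof.
  assert (H9 : forall x y : G, Gamma 2 x -> Gamma 2 y -> gpow (gmul x y) 9 = gone).
  { intros x y; apply product_involutions_gpow9; [exact Hspec | exact H49 |].
    intros t Ht; apply (Hcent t Ht). }
  assert (Hconj : forall x y : G, Gamma 2 x -> Gamma 2 y ->
                    exists w, Gamma 2 w /\ y = conjg x w)
    by (intros x y Hx Hy; apply conjg_by_involution; auto).
  split; [| split; [| split]].
  - now apply H9.
  - intros x y Hx Hy; destruct (Hconj x y Hx Hy) as [w [_ Hw]]; now exists w.
  - intro y; split.
    + intro Hy; destruct (Hconj a y Ha Hy) as [w [_ Hw]]; now exists w.
    + intros [x ->]; now apply Gamma2_conjg.
  - intro y; split.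
    + intro Hy; now apply Hconj.
    + intros [x [_ ->]]; now apply Gamma2_conjg.
Qed.
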